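(* For every index coding instance $\mathcal{I}=\{(i\mid A_i):i\in[m]\}$, $\beta_{\text{FP-UMCD}}(\mathcal{I})\le\beta_{\text{FPCC}}(\mathcal{I})$.
   Context: For $M\subseteq[m]$, the subinstance $M$ has receivers $M$ and side information $A_i\cap M$; $\beta_{\text{MDS}}(M)=|M|-\min_{i\in M}|M\cap A_i|$. $\beta_{\text{FPCC}}(\mathcal{I})=\min\sum_j\gamma_j\beta_{\text{MDS}}(M_j)$ and $\beta_{\text{FP-UMCD}}(\mathcal{I})=\min\sum_j\gamma_j\beta_{\text{UMCD}}(M_j)$, both minima over finite families of (possibly overlapping) subsets $M_1,\dots,M_n\subseteq[m]$ and weights $\gamma_j\in[0,1]$ with $\sum_{j:\,i\in M_j}\gamma_j\ge1$ for all $i\in[m]$. UMCD algorithm on a (sub)instance with receiver set $V$: $B_i=V\setminus(A_i\cup\{i\})$ (within $V$); $\boldsymbol{G}_{[k]}^L$ is the submatrix of the first $k$ rows and columns $L$ of a $0/1$ matrix, $\mathrm{mcm}$ the maximum number of $1$-entries in distinct rows and columns (0 if no columns); $N=V$, $k=0$; while $N\ne\emptyset$: $k\leftarrow k+1$; pick $w\in N$ minimizing $|A_w|$ (arbitrary tie-breaking); row $k$ is the indicator of $\{w\}\cup A_w$; remove $w$; remove every $i\in N$ with $\mathrm{mcm}(\boldsymbol{G}_{[k]}^{\{i\}\cup B_i})=\mathrm{mcm}(\boldsymbol{G}_{[k]}^{B_i})+1$; output $\beta_{\text{UMCD}}=k$ (a fixed execution for each subinstance). *)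

From HB Require Import structures.
From mathcomp Require Import all_boot all_order all_algebra.
From mathcomp Require Import classical_sets reals.
Set Implicit Arguments. Unset Strict Implicit. Unset Printing Implicit Defensive.
Import Order.TTheory GRing.Theory Num.Theory.

Section IndexCoding.
Local Unset Implicit Arguments.
Variable m : nat.
(* A i : side information of receiver i (receiver i wants message i). *)
Variable A : 'I_m -> {set 'I_m}.

(* beta_MDS of the subinstance M: |M| - min_{i in M} |M cap A_i|
   (equal to 0 for M empty). *)
Definition beta_MDS (M : {set 'I_m}) : nat :=
  #|M| - \big[minn/#|M|]_(i in M) #|M :&: A i|.

(* A 0/1 matrix with k rows and columns indexed by 'I_m is given by the seq of
   its rows, row r being the set of columns where the entry is 1.
   A matching in G_[k]^L: a set of (row, column) pairs with entry 1, column in L,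
   using pairwise distinct rows and pairwise distinct columns. *)
Definition is_matching (rows : seq {set 'I_m}) (L : {set 'I_m})
    (P : {set 'I_(size rows) * 'I_m}) : bool :=
  [forall p in P, (p.2 \in L) && (p.2 \in nth finset.set0 rows p.1)] &&
  [forall p in P, forall q in P,
     ((p.1 == q.1) || (p.2 == q.2)) ==> (p == q)].

Definition mcm (rows : seq {set 'I_m}) (L : {set 'I_m}) : nat :=
  \big[maxn/0%N]_(P : {set 'I_(size rows) * 'I_m} | is_matching rows L P) #|P|.

(* UMCD on the subinstance with receiver set V (side information A i :&: V).
   [umcd_run V N rows k]: from the state with remaining set N and matrix rows
   [rows] (built so far), some execution (some tie-breaking) outputs k. *)
Inductive umcd_run (V : {set 'I_m}) : {set 'I_m} -> seq {set 'I_m} -> nat -> Prop :=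
| umcd_done rows : umcd_run V finset.set0 rows (size rows)
| umcd_step (N : {set 'I_m}) (rows : seq {set 'I_m}) (w : 'I_m) (k : nat) :
    w \in N ->
    (forall u, u \in N -> #|A w :&: V| <= #|A u :&: V|) ->
    umcd_run V
      [set i in N :\ w |
         mcm (rcons rows (w |: (A w :&: V))) ([set i] :|: (V :\: (A i :|: [set i])))
         != (mcm (rcons rows (w |: (A w :&: V))) (V :\: (A i :|: [set i]))).+1]
      (rcons rows (w |: (A w :&: V))) k ->
    umcd_run V N rows k.

Definition umcd_output (V : {set 'I_m}) (k : nat) : Prop := umcd_run V V [::] k.

Definition beta_FP (R : realType) (beta : {set 'I_m} -> nat) : R :=
  inf [set x : R | exists (n : nat) (Ms : 'I_n -> {set 'I_m}) (g : 'I_n -> R),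
        [/\ (forall j, 0 <= g j <= 1)%R,
            (forall i : 'I_m, (1 <= \sum_(j < n | i \in Ms j) g j)%R) &
            x = (\sum_(j < n) g j * (beta (Ms j))%:R)%R]].

End IndexCoding.

From mathcomp Require Import all_boot all_order all_algebra.
From mathcomp Require Import zify.
Import Order.TTheory GRing.Theory Num.Theory.

(* Fractional partitioning is monotone in the cost of the parts, so it is enough
   that every UMCD execution on a subinstance V outputs at most
   beta_MDS(V) = |V| - d, where d is the least side-information size within V.
   The rows built by UMCD stay expanding: every nonempty set T of rows covers at
   least |T| + d columns.  A new row {w} u A_w can only break this by lying in the
   cover of a tight set T0 of earlier rows.  Hall's theorem then matches the
   columns of that cover outside A_w injectively into T0, and exchanging these
   entries into a maximum matching on the columns B_w gains the column w; so w
   satisfied the removal test at the previous step and is no longer a candidate.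
   At the end the k rows cover at most |V| columns, whence k + d <= |V|. *)

Set Implicit Arguments. Unset Strict Implicit. Unset Printing Implicit Defensive.

Section HallMarriage.
Variables (I J : finType) (j0 : J).
Implicit Types (S U W : {set I}) (E : I -> {set J}) (C : {set J}).

Definition hall_condition S E :=
  forall U, U \subset S -> #|U| <= #|\bigcup_(i in U) E i|.

Definition distinct_representatives S E (g : I -> J) :=
  {in S, forall i, g i \in E i} /\ {in S &, injective g}.

Lemma bigcup_setDr W E C :
  \bigcup_(i in W) (E i :\: C) = (\bigcup_(i in W) E i) :\: C.
Proof.
apply/setP => x; rewrite inE; apply/bigcupP/andP => [[i iW]|[xC /bigcupP[i iW xE]]].
  by case/setDP => xE xC; split=> //; apply/bigcupP; exists i.
by exists i; rewrite // inE xC.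
Qed.

Lemma distinct_representatives_glue S U E C g1 g2 :
  distinct_representatives U E g1 -> {in U, forall i, g1 i \in C} ->
  distinct_representatives (S :\: U) (fun i => E i :\: C) g2 ->
  distinct_representatives S E (fun i => if i \in U then g1 i else g2 i).
Proof.
move=> [g1E g1inj] g1C [g2E g2inj].
have g2S i : i \in S -> i \notin U -> g2 i \in E i :\: C.
  by move=> iS iU; apply: g2E; rewrite inE iU.
split=> [i iS | i i' iS i'S] /=.
  by case: ifPn => [/g1E // | /(g2S i iS)/setDP[]].
case: ifPn => iU; case: ifPn => i'U.
- exact: g1inj.
- by move=> e; case/setDP: (g2S i' i'S i'U); rewrite -e g1C.
- by move=> e; case/setDP: (g2S i iS iU); rewrite e g1C.
- by apply: g2inj; rewrite inE ?iU ?i'U.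
Qed.

Lemma hall_condition_critical S U E :
  hall_condition S E -> U \subset S -> #|\bigcup_(i in U) E i| <= #|U| ->
  hall_condition (S :\: U) (fun i => E i :\: \bigcup_(j in U) E j).
Proof.
move=> hallS sUS critU W sWSU; rewrite bigcup_setDr.
move: critU; set NU := \bigcup_(j in U) E j; set NW := \bigcup_(i in W) E i => critU.
have disjWU : W :&: U = set0.
  apply/setP=> i; rewrite !inE; apply/negbTE/andP=> -[/(subsetP sWSU)].
  by rewrite inE => /andP[/negP].
have hallWU : #|W :|: U| <= #|NW :|: NU|.
  rewrite -bigcup_setU; apply: hallS; rewrite subUset sUS andbT.
  exact: subset_trans sWSU (subsetDl _ _).
have := cardsUI W U; have := cardsUI NW NU; have := cardsD NW NU.
rewrite disjWU cards0; lia.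
Qed.

Lemma hall_condition_surplus S E i0 c :
  (forall U, U \subset S -> U != set0 -> U != S -> #|U| < #|\bigcup_(i in U) E i|) ->
  i0 \in S -> hall_condition (S :\ i0) (fun i => E i :\ c).
Proof.
move=> surplus i0S W sW; rewrite bigcup_setDr.
have [->|[i iW]] := set_0Vmem W; first by rewrite cards0.
have W0 : W != set0 by apply/set0Pn; exists i.
have WS : W != S.
  by apply: contraTneq i0S => <-; apply/negP => /(subsetP sW); rewrite !inE eqxx.
have := surplus W (subset_trans sW (subsetDl _ _)) W0 WS.
have := cardsD1 c (\bigcup_(i in W) E i); lia.
Qed.

Theorem hall_marriage S E :
  hall_condition S E -> exists g, distinct_representatives S E g.
Proof.
elim: {S}_.+1 {-2}S (ltnSn #|S|) E => // n IH S ltSn E hallS.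
have [-> | [i0 i0S]] := set_0Vmem S.
  by exists (fun=> j0); split=> [i|i i']; rewrite inE.
case: (pickP [pred U : {set I} | [&& U \subset S, U != set0, U != S &
                #|\bigcup_(i in U) E i| <= #|U|]]) => [U /and4P[sUS U0 US critU] | noncrit].
  have ltUS : #|U| < #|S| by rewrite proper_card // properEneq US.
  have [g1 g1U] : exists g, distinct_representatives U E g.
    apply: (IH U (leq_trans ltUS ltSn)) => W sWU; apply: hallS; apply: subset_trans sWU sUS.
  have [g2 g2SU] : exists g, distinct_representatives (S :\: U)
                     (fun i => E i :\: \bigcup_(j in U) E j) g.
    apply: IH; last exact: hall_condition_critical.
    by rewrite cardsDS //; move: ltSn; rewrite -card_gt0 in U0; lia.
  exists (fun i => if i \in U then g1 i else g2 i).
  apply: distinct_representatives_glue (g1U) _ g2SU => i iU.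
  by apply/bigcupP; exists i => //; case: g1U => /(_ i iU).
have surplus U : U \subset S -> U != set0 -> U != S -> #|U| < #|\bigcup_(i in U) E i|.
  by move=> sUS U0 US; have := noncrit U; rewrite /= sUS U0 US /= ltnNge => ->.
have [c cE] : exists c, c \in E i0.
  apply/set0Pn; rewrite -card_gt0.
  by have := hallS [set i0]; rewrite sub1set i0S cards1 big_set1 => ->.
have [g2 g2S] : exists g, distinct_representatives (S :\ i0) (fun i => E i :\ c) g.
  apply: IH; last exact: hall_condition_surplus.
  by move: ltSn; rewrite (cardsD1 i0 S) i0S.
exists (fun i => if i \in [set i0] then c else g2 i).
apply: distinct_representatives_glue g2S => [|i _]; last exact: set11.
by split=> [i /set1P-> | i i' /set1P-> /set1P->].
Qed.

End HallMarriage.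

Section Matchings.
Variables (m : nat) (rows : seq {set 'I_m}).
Local Notation entry := ('I_(size rows) * 'I_m)%type.
Implicit Types (L B Q : {set 'I_m}) (P : {set entry}).

Lemma is_matchingP L P :
  reflect ({in P, forall p : entry, p.2 \in L /\ p.2 \in nth set0 rows p.1} /\
           {in P &, forall p q : entry, p.1 = q.1 \/ p.2 = q.2 -> p = q})
          (is_matching m rows L P).
Proof.
apply: (iffP andP) => [[/forallP inP /forallP injP] | [inP injP]]; split.
- by move=> p pP; have /implyP/(_ pP)/andP := inP p.
- move=> p q pP qP e; have /implyP/(_ pP)/forallP/(_ q)/implyP/(_ qP)/implyP := injP p.
  by move=> /(_ _)/eqP; apply; case: e => ->; rewrite eqxx ?orbT.
- by apply/forallP => p; apply/implyP => /inP[-> ->].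
apply/forallP => p; apply/implyP => pP; apply/forallP => q; apply/implyP => qP.
by apply/implyP => /orP e; apply/eqP/injP => //; case: e => /eqP; [left | right].
Qed.

Lemma leq_mcm L P : is_matching m rows L P -> #|P| <= mcm m rows L.
Proof. exact: leq_bigmax_cond. Qed.

Lemma mcm_witness L : exists2 P, is_matching m rows L P & #|P| = mcm m rows L.
Proof.
have match0 : is_matching m rows L set0 by apply/is_matchingP; split=> p; rewrite inE.
rewrite /mcm (bigop.bigmax_eq_arg set0 match0).
by case: arg_maxnP => // P; exists P.
Qed.

Lemma mcm_setU1 L i : mcm m rows (i |: L) <= (mcm m rows L).+1.
Proof.
apply/bigmax_leqP => P /is_matchingP[inP injP].
set avoid_i := [set p : entry | p.2 != i].
have matchingL : is_matching m rows L (P :&: avoid_i).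
  apply/is_matchingP; split=> [p | p q]; rewrite !inE => /andP[pP pi]; last first.
    by move=> /andP[qP _]; apply: injP.
  by case: (inP p pP); rewrite !inE (negbTE pi).
have hit_i_le1 : #|P :\: avoid_i| <= 1.
  apply/card_le1_eqP => p q; rewrite !inE !negbK => /andP[/eqP pi pP] /andP[/eqP qi qP].
  by apply: injP => //; right; rewrite pi qi.
by rewrite -(cardsID avoid_i P) -addn1 leq_add ?leq_mcm.
Qed.

Lemma mcm_exchange L B Q P (g : 'I_m -> 'I_(size rows)) :
  is_matching m rows B P -> B \subset L -> Q \subset L ->
  {in Q, forall c, c \in nth set0 rows (g c)} -> {in Q &, injective g} ->
  {in P, forall p : entry, p.1 \in g @: Q -> p.2 \in Q} ->
  #|P| + #|Q :\: B| <= mcm m rows L.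
Proof.
move=> /is_matchingP[inP injP] sBL sQL gQ ginj gQ_closed.
set outQ : {set entry} := [set p | p.2 \notin Q].
set PQ : {set entry} := [set (g c, c) | c in Q].
have inPQ p : p \in PQ -> p.2 \in Q /\ p.2 \in nth set0 rows p.1.
  by case/imsetP => c cQ -> /=; rewrite cQ gQ.
have matchingL : is_matching m rows L ((P :&: outQ) :|: PQ).
  apply/is_matchingP; split=> [p | ].
    by case/setUP => [/setIP[/inP[/(subsetP sBL)]] | /inPQ[/(subsetP sQL)]].
  have cross p q : p \in P :&: outQ -> q \in PQ -> ~ (p.1 = q.1 \/ p.2 = q.2).
    rewrite !inE => /andP[pP /negP pnQ] /imsetP[c cQ ->] /= [e | e]; apply: pnQ.
      by apply: gQ_closed; rewrite // e imset_f.
    by rewrite e.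
  move=> p q /setUP[pP | pPQ] /setUP[qP | qPQ] e.
  - by case/setIP: pP qP => pP _ /setIP[qP _]; apply: injP.
  - by case: (cross p q pP qPQ e).
  - by exfalso; apply: (cross q p qP pPQ); case: e => ->; [left | right].
  - case/imsetP: pPQ qPQ e => c cQ -> /imsetP[c' c'Q ->] /=.
    by case=> [/(ginj _ _ cQ c'Q) e | e]; rewrite e.
have cardPQ : #|PQ| = #|Q| by apply: card_in_imset => c c' _ _ [].
have disjPQ : [disjoint P :&: outQ & PQ].
  apply/pred0P => p /=; apply/andP => -[/setIP[_]].
  by rewrite inE => /negP pnQ /inPQ[/pnQ].
have cardP : #|P :\: outQ| <= #|Q :&: B|.
  rewrite -(card_in_imset (f := snd)) => [|p q]; last first.
    by rewrite !inE => /andP[_ pP] /andP[_ qP] e; apply: injP => //; right.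
  apply/subset_leq_card/subsetP => x /imsetP[p].
  by rewrite !inE negbK => /andP[pQ /inP[pB _]] ->; rewrite pQ.
have := leq_mcm matchingL; rewrite cardsU (disjoint_setI0 disjPQ) cards0 subn0 cardPQ.
have := cardsID outQ P; have := cardsID B Q; lia.
Qed.

Lemma mcm_nil L : mcm m [::] L = 0.
Proof.
apply/eqP; rewrite -leqn0; apply/bigmax_leqP => P _.
by rewrite leqn0 cards_eq0; apply/eqP/setP => -[[]].
Qed.

End Matchings.

Section UMCDBound.
Variables (m : nat) (A : 'I_m -> {set 'I_m}).
Hypothesis A_irr : forall i, i \notin A i.
Variable V : {set 'I_m}.
Implicit Types (rows : seq {set 'I_m}) (N : {set 'I_m}).

Definition side_min := \big[minn/#|V|]_(i in V) #|V :&: A i|.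

Definition Bset i := V :\: (A i :|: [set i]).

Definition new_row w := w |: (A w :&: V).

Definition cover rows n (T : {set 'I_n}) := \bigcup_(j in T) nth set0 rows j.

Definition rows_within rows := all (fun r : {set 'I_m} => r \subset V) rows.

(* Index sets range over any ['I_n] with [n = size rows]: the bound must survive
   [rcons], and [size (rcons rows r)] is not convertible to [(size rows).+1]. *)
Definition expanding rows := forall n (T : {set 'I_n}), n = size rows ->
  T != set0 -> #|T| + side_min <= #|cover rows T|.

Lemma side_min_le i : i \in V -> side_min <= #|A i :&: V|.
Proof.
move=> iV; rewrite setIC /side_min -minEnat.
exact: (@bigmin_le_cond _ nat _ _ i _ _ iV).
Qed.

Lemma card_new_row w : #|new_row w| = #|A w :&: V|.+1.
Proof. by rewrite cardsU1 inE (negbTE (A_irr w)). Qed.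

Lemma cover_sub rows n (T : {set 'I_n}) : rows_within rows -> cover rows T \subset V.
Proof.
move=> /allP rowsV; apply/bigcupsP => j _.
have [jrows | ?] := ltnP j (size rows); first exact/rowsV/mem_nth.
by rewrite nth_default ?sub0set.
Qed.

Lemma tight_cover_hall rows (T0 : {set 'I_(size rows)}) (Q : {set 'I_m}) :
  expanding rows -> #|cover rows T0| <= #|T0| + side_min ->
  Q \subset cover rows T0 -> #|Q| + side_min <= #|cover rows T0| ->
  hall_condition Q (fun c => [set j in T0 | c \in nth set0 rows j]).
Proof.
move=> expand tight sQ cardQ C sCQ.
set U := \bigcup_(c in C) _.
have sUT0 : U \subset T0 by apply/bigcupsP => c _; apply/subsetP => j; rewrite inE => /andP[].
have sCcover : C \subset cover rows T0 := subset_trans sCQ sQ.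
have rest_cover : cover rows (T0 :\: U) \subset cover rows T0 :\: C.
  apply/bigcupsP => j /setDP[jT0 jU]; apply/subsetP => x xj; rewrite inE.
  rewrite (subsetP (bigcup_sup j jT0)) // andbT; apply: contraNN jU => xC.
  by apply/bigcupP; exists x; rewrite // inE jT0.
have := subset_leq_card sCQ; have := cardsDS sUT0; have := cardsDS sCcover.
have := subset_leq_card sUT0; have := subset_leq_card sCcover.
have [U_T0 | ] := eqVneq (T0 :\: U) set0.
  by move/eqP: U_T0; rewrite setD_eq0 => /subset_leq_card; lia.
move=> /(expand _ _ erefl); have := subset_leq_card rest_cover; lia.
Qed.

Lemma mcm_new_row_tight rows w (T0 : {set 'I_(size rows)}) :
  rows_within rows -> expanding rows -> w \in V ->
  #|cover rows T0| <= #|T0| + side_min -> new_row w \subset cover rows T0 ->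
  mcm m rows (w |: Bset w) = (mcm m rows (Bset w)).+1.
Proof.
move=> rowsV expand wV tight sw_cover.
set Q := cover rows T0 :\: A w.
have w_cover : w \in cover rows T0 by apply: (subsetP sw_cover); apply: setU11.
have wQ : w \in Q by rewrite inE w_cover (A_irr w).
have sQL : Q \subset w |: Bset w.
  apply/subsetP => x /setDP[xcover xnA].
  by rewrite !inE (negbTE xnA) (subsetP (cover_sub T0 rowsV) _ xcover); case: eqP.
have cardQ : #|Q| + side_min <= #|cover rows T0|.
  have sAw : A w :&: V \subset cover rows T0 :&: A w.
    by rewrite subsetI subsetIl andbT; apply: subset_trans sw_cover; apply: subsetUr.
  have := subset_leq_card sAw; have := side_min_le wV; have := cardsID (A w) (cover rows T0).
  rewrite -/Q; lia.
have [j0 _] : exists j0 : 'I_(size rows), j0 \in T0 by case/bigcupP: w_cover => j; exists j.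
have [g [gT0 ginj]] := hall_marriage j0 (tight_cover_hall expand tight (subsetDl _ _) cardQ).
have [P PB cardP] := mcm_witness rows (Bset w).
apply/eqP; rewrite eqn_leq mcm_setU1 -cardP /=.
have w_new : w \in Q :\: Bset w by rewrite inE wQ andbT /Bset !inE eqxx orbT.
apply: leq_trans (mcm_exchange PB (subsetUr _ _) sQL _ ginj _).
- by rewrite -addn1 leq_add2l card_gt0; apply/set0Pn; exists w.
- by move=> c /gT0; rewrite inE => /andP[].
move=> p pP /imsetP[c /gT0 + e1]; rewrite inE -e1 => /andP[p1T0 _].
case/is_matchingP: PB => /(_ p pP)[pB prow] _.
rewrite inE; apply/andP; split.
  by move: pB; rewrite /Bset !inE negb_or => /andP[/andP[]].
by apply/bigcupP; exists p.1.
Qed.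

Lemma card_ord_preim n (T : {set 'I_n.+1}) :
  #|T| = #|widen_ord (leqnSn n) @^-1: T| + (ord_max \in T).
Proof.
rewrite -!sum1_card big_mkcond big_ord_recr /= [in RHS]big_mkcond /=.
by congr (_ + _); apply: eq_bigr => j _; rewrite inE.
Qed.

Lemma cover_rcons rows r (T : {set 'I_(size rows).+1}) :
  cover (rcons rows r) T =
  cover rows (widen_ord (leqnSn _) @^-1: T) :|: (if ord_max \in T then r else set0).
Proof.
rewrite /cover big_mkcond big_ord_recr /= [in RHS]big_mkcond /=; congr (_ :|: _).
  by apply: eq_bigr => j _; rewrite inE nth_rcons ltn_ord.
by rewrite nth_rcons ltnn eqxx.
Qed.

Lemma expanding_rcons rows (r : {set 'I_m}) :
  expanding rows -> side_min < #|r| ->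
  (forall T0 : {set 'I_(size rows)},
     #|cover rows T0| <= #|T0| + side_min -> ~~ (r \subset cover rows T0)) ->
  expanding (rcons rows r).
Proof.
move=> expand big_r no_tight_cover n T; rewrite size_rcons => en; subst n => T_ne.
rewrite cover_rcons card_ord_preim.
set T0 : {set 'I_(size rows)} := widen_ord _ @^-1: T.
have [T0_empty | T0_ne] := eqVneq T0 set0.
  suff -> : ord_max \in T by rewrite T0_empty cards0 /cover big_set0 set0U.
  case/set0Pn: T_ne => j; case: (unliftP ord_max j) => [j' -> jT | -> //].
  suff : j' \in T0 by rewrite T0_empty inE.
  by rewrite inE; congr (_ \in T): jT; apply: val_inj; exact: lift_max.
have cover_T0 := expand _ T0 erefl T0_ne.
case: (ord_max \in T) => /=; last by rewrite setU0 addn0.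
rewrite addnAC addn1.
have [tight | loose] := leqP #|cover rows T0| (#|T0| + side_min); last first.
  exact: leq_trans loose (subset_leq_card (subsetUl _ _)).
case/subsetPn: (no_tight_cover T0 tight) => x xr xT0.
have sub_x : x |: cover rows T0 \subset cover rows T0 :|: r.
  by rewrite subUset sub1set !inE xr orbT subsetUl.
by apply: leq_trans (subset_leq_card sub_x); rewrite cardsU1 xT0.
Qed.

Definition umcd_invariant N rows :=
  [/\ N \subset V, rows_within rows, expanding rows &
      {in N, forall i, mcm m rows (i |: Bset i) != (mcm m rows (Bset i)).+1}].

Lemma umcd_invariant_step N rows w :
  umcd_invariant N rows -> w \in N ->
  let rows' := rcons rows (new_row w) in
  umcd_invariant [set i in N :\ w | mcm m rows' (i |: Bset i) != (mcm m rows' (Bset i)).+1]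
                 rows'.
Proof.
move=> [sNV rowsV expand undecoded] wN /=.
have wV : w \in V := subsetP sNV w wN.
split.
- by apply/subsetP => i; rewrite !inE => /andP[/andP[_ /(subsetP sNV)]].
- rewrite /rows_within all_rcons; apply/andP; split=> //.
  by rewrite subUset sub1set wV subsetIr.
- apply: expanding_rcons => // [|T0 tight]; first by rewrite card_new_row ltnS side_min_le.
  apply/negP => /(mcm_new_row_tight rowsV expand wV tight)/eqP.
  exact/negP/undecoded.
- by move=> i; rewrite inE => /andP[].
Qed.

Lemma umcd_run_le N rows k :
  umcd_run m A V N rows k -> umcd_invariant N rows -> k <= #|V| - side_min.
Proof.
elim=> {N rows k} [rows | N rows w k wN _ _ IH] inv; last first.
  exact/IH/umcd_invariant_step.
case: inv => _ rowsV expand _.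
have [-> // | rows_ne] := posnP (size rows).
have setT_ne : [set: 'I_(size rows)] != set0 by apply/set0Pn; exists (Ordinal rows_ne).
have := expand _ _ erefl setT_ne; rewrite cardsT card_ord.
have := subset_leq_card (cover_sub [set: 'I_(size rows)] rowsV); lia.
Qed.

Lemma umcd_output_le_beta_MDS k : umcd_output m A V k -> k <= beta_MDS m A V.
Proof.
move/umcd_run_le; apply; split => //.
- by move=> n T en; subst n => /set0Pn[[]].
- by move=> i _; rewrite !mcm_nil.
Qed.

End UMCDBound.

From mathcomp Require Import classical_sets reals.

Lemma le_beta_FP (R : realType) m (beta1 beta2 : {set 'I_m} -> nat) :
  (forall M, beta1 M <= beta2 M) -> (beta_FP m R beta1 <= beta_FP m R beta2)%R.
Proof.
move=> le_beta; apply: lb_le_inf.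
  exists (beta2 [set: 'I_m])%:R%R, 1, (fun=> [set: 'I_m]), (fun=> 1%R); split.
  - by move=> j; rewrite ler01 lexx.
  - by move=> i; rewrite big_mkcond big_ord1 inE.
  - by rewrite big_ord1 mul1r.
move=> _ [n [Ms [g [g01 g_covers ->]]]].
apply: (le_trans (y := (\sum_(j < n) g j * (beta1 (Ms j))%:R)%R)).
  apply: ge_inf; last by exists n, Ms, g.
  exists 0%R => _ [n' [Ms' [g' [g'01 _ ->]]]].
  by apply: sumr_ge0 => j _; rewrite mulr_ge0 //; case/andP: (g'01 j).
apply: ler_sum => j _; rewrite ler_wpM2l ?ler_nat //.
by case/andP: (g01 j).
Qed.

Theorem proposition13 (R : realType) (m : nat) (A : 'I_m -> {set 'I_m})
    (hA : forall i : 'I_m, i \notin A i)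
    (beta_UMCD : {set 'I_m} -> nat)
    (hU : forall M : {set 'I_m}, umcd_output m A M (beta_UMCD M)) :
  (beta_FP m R beta_UMCD <= beta_FP m R (beta_MDS m A))%R.
Proof.
apply: le_beta_FP => M.
exact: (umcd_output_le_beta_MDS hA (hU M)).
Qed.
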